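(* Let $\mathcal{X}$ be a feature space, $p(\boldsymbol{x},y)$ a joint density on $\mathcal{X}\times\{+1,-1\}$ with class priors $\pi_+=p(y=+1)$, $\pi_-=1-\pi_+$ and class-conditional densities $p_+(\boldsymbol{x})=p(\boldsymbol{x}\mid y=+1)$, $p_-(\boldsymbol{x})=p(\boldsymbol{x}\mid y=-1)$. Let pairs $(\boldsymbol{x}_i,\boldsymbol{x}_i')$, $i=1,\dots,n$, be drawn i.i.d. from the density $$\widetilde{p}(\boldsymbol{x},\boldsymbol{x}')=\frac{\pi_+^2p_+(\boldsymbol{x})p_+(\boldsymbol{x}')+\pi_-^2p_-(\boldsymbol{x})p_-(\boldsymbol{x}')+\pi_+\pi_-p_+(\boldsymbol{x})p_-(\boldsymbol{x}')}{\pi_+^2+\pi_-^2+\pi_+\pi_-},$$ and let $\widetilde{\mathcal{D}}_+=\{\boldsymbol{x}_i\}_{i=1}^n$ and $\widetilde{\mathcal{D}}_-=\{\boldsymbol{x}_i'\}_{i=1}^n$. Then the points of $\widetilde{\mathcal{D}}_+$ are independently drawn from $$\widetilde{p}_+(\boldsymbol{x})=\frac{\pi_+}{\pi_-^2+\pi_+}p_+(\boldsymbol{x})+\frac{\pi_-^2}{\pi_-^2+\pi_+}p_-(\boldsymbol{x}),$$ and the points of $\widetilde{\mathcal{D}}_-$ are independently drawn from $$\widetilde{p}_-(\boldsymbol{x}')=\frac{\pi_+^2}{\pi_+^2+\pi_-}p_+(\boldsymbol{x}')+\frac{\pi_-}{\pi_+^2+\pi_-}p_-(\boldsymbol{x}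').$$
   Context: $\widetilde{p}(\boldsymbol{x},\boldsymbol{x}')$ is the density of pairwise comparison data: pairs of unlabeled points whose (unobserved) labels $(y,y')$ are conditioned to lie in $\{(+1,+1),(+1,-1),(-1,-1)\}$, where the two labeled points are drawn independently from $p(\boldsymbol{x},y)$. *)

From HB Require Import structures.
From mathcomp Require Import all_boot all_order all_algebra.
From mathcomp Require Import all_classical all_reals all_analysis.
Set Implicit Arguments. Unset Strict Implicit. Unset Printing Implicit Defensive.
Import Order.TTheory GRing.Theory Num.Theory.
Local Open Scope classical_set_scope.
Local Open Scope ring_scope.

Definition is_density {d} {T : measurableType d} {R : realType}
    (mu : {measure set T -> \bar R}) (f : T -> R) : Prop :=
  [/\ measurable_fun setT f, (forall x, 0 <= f x) &
      (\int[mu]_x (f x)%:E = 1)%E].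

Definition has_density {d} {Omega : measurableType d} {R : realType}
    (P : probability Omega R) {dT} {T : measurableType dT}
    (X : Omega -> T) (nu : set T -> \bar R) (f : T -> R) : Prop :=
  forall A : set T, measurable A ->
    P (X @^-1` A) = (\int[nu]_(z in A) (f z)%:E)%E.

Definition mutually_independent {d} {Omega : measurableType d} {R : realType}
    (P : probability Omega R) {I : finType} {dT} {T : measurableType dT}
    (Y : I -> Omega -> T) : Prop :=
  forall (J : {set I}) (B : I -> set T), (forall i, measurable (B i)) ->
    P (\bigcap_(i in [set` J]) (Y i @^-1` B i)) =
    (\prod_(i in J) P (Y i @^-1` B i))%E.

Definition pcomp_density {T : Type} {R : realType} (pip : R)
    (pp pm : T -> R) (z : T * T) : R :=
  let pim := 1 - pip in
  (pip ^+ 2 * pp z.1 * pp z.2 + pim ^+ 2 * pm z.1 * pm z.2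
     + pip * pim * pp z.1 * pm z.2) / (pip ^+ 2 + pim ^+ 2 + pip * pim).

Definition pcomp_pos {T : Type} {R : realType} (pip : R) (pp pm : T -> R)
    (x : T) : R :=
  let pim := 1 - pip in
  pip / (pim ^+ 2 + pip) * pp x + pim ^+ 2 / (pim ^+ 2 + pip) * pm x.

Definition pcomp_neg {T : Type} {R : realType} (pip : R) (pp pm : T -> R)
    (x : T) : R :=
  let pim := 1 - pip in
  pip ^+ 2 / (pip ^+ 2 + pim) * pp x + pim / (pip ^+ 2 + pim) * pm x.

From HB Require Import structures.
From mathcomp Require Import all_boot all_order all_algebra.
From mathcomp Require Import all_classical all_reals all_analysis.
From mathcomp Require Import measurable_realfun.
From mathcomp Require Import ring lra.
Import Order.TTheory GRing.Theory Num.Theory.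
Local Open Scope classical_set_scope.
Local Open Scope ring_scope.

(* Each x_i is a measurable function of the pair (x_i, x'_i), so independence of
   the pairs passes to the x_i, and by Tonelli the density of x_i is the joint
   density p~ integrated over x'.  Since p~ is bilinear in (p_+, p_-) and both
   are probability densities, integrating out x' leaves a mixture of p_+(x) and
   p_-(x); the normalizer pi_+^2 + pi_-^2 + pi_+ pi_- equals pi_-^2 + pi_+
   (and pi_+^2 + pi_-), which turns the weights into those of p~_+ (of p~_-). *)

Section product_integral_preimage.
Local Open Scope ereal_scope.
Context {R : realType} {d1 d2 : measure_display}
  {T1 : measurableType d1} {T2 : measurableType d2}.
Context {m1 : {measure set T1 -> \bar R}} {m2 : {measure set T2 -> \bar R}}.
Hypotheses (m1_sf : sigma_finite setT m1) (m2_sf : sigma_finite setT m2).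

(* [{measure}] records no sigma-finiteness; registering [m1_sf] and [m2_sf] on
   these aliases is what makes Fubini-Tonelli applicable to [m1 \x m2]. *)
Let m1' := m1 : set T1 -> \bar R.
Let m2' := m2 : set T2 -> \bar R.
HB.instance Definition _ := Measure.on m1'.
HB.instance Definition _ := Measure.on m2'.
HB.instance Definition _ := Measure_isSigmaFinite.Build _ _ _ m1' m1_sf.
HB.instance Definition _ := Measure_isSigmaFinite.Build _ _ _ m2' m2_sf.

Variable f : T1 * T2 -> \bar R.
Hypotheses (mf : measurable_fun [set: T1 * T2] f) (f_ge0 : forall z, 0 <= f z).

Let mf_patch (D : set (T1 * T2)) :
  measurable D -> measurable_fun [set: T1 * T2] (f \_ D).
Proof.
move=> mD; apply/(measurable_restrictT _ _).1 => //.
exact: measurable_funS mf.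
Qed.

Let patch_ge0 (D : set (T1 * T2)) z : 0 <= (f \_ D) z.
Proof. by rewrite patchE; case: ifP. Qed.

Lemma integral_preimage_fst (A : set T1) : measurable A ->
  \int[m1 \x m2]_(z in fst @^-1` A) f z = \int[m1]_(x in A) \int[m2]_y f (x, y).
Proof.
move=> mA; have mA1 : measurable (fst @^-1` A : set (T1 * T2)).
  by rewrite -[_ @^-1` _]setTI; exact: measurable_fst.
rewrite (integral_mkcond (mu := m1' \x m2')).
rewrite (fubini_tonelli1 (m1 := m1') (m2 := m2') _ (mf_patch _ mA1) (patch_ge0 _)).
rewrite [RHS]integral_mkcond; apply: eq_integral => x _; rewrite patchE /fubini_F.
have memA y : ((x, y) \in fst @^-1` A) = (x \in A) by [].
under eq_integral do rewrite patchE memA.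
by case: (x \in A) => //; rewrite integral0.
Qed.

Lemma integral_preimage_snd (A : set T2) : measurable A ->
  \int[m1 \x m2]_(z in snd @^-1` A) f z = \int[m2]_(y in A) \int[m1]_x f (x, y).
Proof.
move=> mA; have mA2 : measurable (snd @^-1` A : set (T1 * T2)).
  by rewrite -[_ @^-1` _]setTI; exact: measurable_snd.
rewrite (integral_mkcond (mu := m1' \x m2')).
rewrite (fubini_tonelli2 (m1 := m1') (m2 := m2') _ (mf_patch _ mA2) (patch_ge0 _)).
rewrite [RHS]integral_mkcond; apply: eq_integral => y _; rewrite patchE /fubini_G.
have memA x : ((x, y) \in snd @^-1` A) = (y \in A) by [].
under eq_integral do rewrite patchE memA.
by case: (y \in A) => //; rewrite integral0.
Qed.

End product_integral_preimage.

Section marginal_density.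
Context {R : realType} {d1 d2 : measure_display}
  {T1 : measurableType d1} {T2 : measurableType d2}.
Context {m1 : {measure set T1 -> \bar R}} {m2 : {measure set T2 -> \bar R}}.
Hypotheses (m1_sf : sigma_finite setT m1) (m2_sf : sigma_finite setT m2).
Context {dO : measure_display} {Omega : measurableType dO}.
Context {P : probability Omega R} {Z : Omega -> T1 * T2} {f : T1 * T2 -> R}.
Hypotheses (mf : measurable_fun [set: T1 * T2] f) (f_ge0 : forall z, 0 <= f z).
Hypothesis Zf : has_density P Z (m1 \x m2)%E f.

Let mEf : measurable_fun [set: T1 * T2] (fun z => (f z)%:E).
Proof. exact/measurable_EFinP. Qed.

Let Ef_ge0 z : (0 <= (f z)%:E)%E.
Proof. by rewrite lee_fin. Qed.

Lemma has_density_fst {g : T1 -> R} :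
  (forall x, \int[m2]_y (f (x, y))%:E = (g x)%:E)%E ->
  has_density P (fst \o Z) m1 g.
Proof.
move=> fg A mA; rewrite comp_preimage Zf; last first.
  by rewrite -[_ @^-1` _]setTI; exact: measurable_fst.
rewrite integral_preimage_fst //; apply: eq_integral => x _; exact: fg.
Qed.

Lemma has_density_snd {g : T2 -> R} :
  (forall y, \int[m1]_x (f (x, y))%:E = (g y)%:E)%E ->
  has_density P (snd \o Z) m2 g.
Proof.
move=> fg A mA; rewrite comp_preimage Zf; last first.
  by rewrite -[_ @^-1` _]setTI; exact: measurable_snd.
rewrite integral_preimage_snd //; apply: eq_integral => y _; exact: fg.
Qed.

End marginal_density.

Lemma mutually_independent_comp {d} {Omega : measurableType d} {R : realType}
    (P : probability Omega R) {I : finType} {dT} {T : measurableType dT}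
    {dU} {U : measurableType dU} (Y : I -> Omega -> T) (g : T -> U) :
  measurable_fun setT g -> mutually_independent P Y ->
  mutually_independent P (fun i => g \o Y i).
Proof.
move=> mg indepY J B mB; apply: (indepY J (fun i => g @^-1` B i)) => i.
by rewrite -[g @^-1` _]setTI; exact: mg.
Qed.

Lemma integral_density_comb {d} {T : measurableType d} {R : realType}
    (mu : {measure set T -> \bar R}) (p q : T -> R) (a b : R) :
  is_density mu p -> is_density mu q -> 0 <= a -> 0 <= b ->
  (\int[mu]_x (a * p x + b * q x)%:E = (a + b)%:E)%E.
Proof.
case=> mp p_ge0 int_p [mq q_ge0 int_q] a_ge0 b_ge0.
under eq_integral do rewrite EFinD !EFinM.
rewrite ge0_integralD //; last 4 first.
- by move=> x _; rewrite -EFinM lee_fin mulr_ge0.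
- by apply: measurable_funeM; exact/measurable_EFinP.
- by move=> x _; rewrite -EFinM lee_fin mulr_ge0.
- by apply: measurable_funeM; exact/measurable_EFinP.
rewrite !ge0_integralZl //; last 4 first.
- exact/measurable_EFinP.
- by move=> x _; rewrite lee_fin.
- exact/measurable_EFinP.
- by move=> x _; rewrite lee_fin.
by rewrite int_p int_q !mule1.
Qed.

Section pairwise_comparison_density.
Context {R : realType} {d : measure_display} {T : measurableType d}.
Context {mu : {measure set T -> \bar R}} {pip : R} {pp pm : T -> R}.
Hypotheses (pip_ge0 : 0 <= pip) (pip_le1 : pip <= 1).
Hypotheses (pp_dens : is_density mu pp) (pm_dens : is_density mu pm).

Let D := pip ^+ 2 + (1 - pip) ^+ 2 + pip * (1 - pip).

Let D_gt0 : 0 < D.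
Proof. rewrite /D; nra. Qed.

Let D_neq0 : D != 0.
Proof. by rewrite gt_eqF. Qed.

Let pim_ge0 : 0 <= 1 - pip.
Proof. by rewrite subr_ge0. Qed.

Lemma pcomp_density_ge0 z : 0 <= pcomp_density pip pp pm z.
Proof.
case: pp_dens pm_dens => _ pp_ge0 _ [_ pm_ge0 _].
by rewrite divr_ge0 ?addr_ge0 ?mulr_ge0 ?exprn_ge0 // ltW.
Qed.

Lemma measurable_pcomp_density :
  measurable_fun [set: T * T] (pcomp_density pip pp pm).
Proof.
case: pp_dens pm_dens => mpp _ _ [mpm _ _].
have mpp1 : measurable_fun [set: T * T] (pp \o fst) by exact: measurableT_comp.
have mpp2 : measurable_fun [set: T * T] (pp \o snd) by exact: measurableT_comp.
have mpm1 : measurable_fun [set: T * T] (pm \o fst) by exact: measurableT_comp.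
have mpm2 : measurable_fun [set: T * T] (pm \o snd) by exact: measurableT_comp.
apply: measurable_funM => //.
by apply: measurable_funD; [apply: measurable_funD|];
  apply: measurable_funM => //; apply: measurable_funM.
Qed.

Lemma pcomp_density_marginal1 x :
  (\int[mu]_y (pcomp_density pip pp pm (x, y))%:E = (pcomp_pos pip pp pm x)%:E)%E.
Proof.
case: pp_dens pm_dens => _ pp_ge0 _ [_ pm_ge0 _].
pose a := pip ^+ 2 * pp x / D.
pose b := ((1 - pip) ^+ 2 * pm x + pip * (1 - pip) * pp x) / D.
rewrite (eq_integral (fun y => (a * pp y + b * pm y)%:E)); last first.
  by move=> y _; rewrite /pcomp_density /= -/D /a /b; congr EFin; field.
rewrite integral_density_comb //; last 2 first.
- by rewrite /a divr_ge0 ?mulr_ge0 ?exprn_ge0 // ltW.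
- by rewrite /b divr_ge0 ?addr_ge0 ?mulr_ge0 ?exprn_ge0 // ltW.
congr EFin; rewrite /pcomp_pos /= /a /b.
have -> : (1 - pip) ^+ 2 + pip = D by rewrite /D; ring.
by field.
Qed.

Lemma pcomp_density_marginal2 y :
  (\int[mu]_x (pcomp_density pip pp pm (x, y))%:E = (pcomp_neg pip pp pm y)%:E)%E.
Proof.
case: pp_dens pm_dens => _ pp_ge0 _ [_ pm_ge0 _].
pose a := (pip ^+ 2 * pp y + pip * (1 - pip) * pm y) / D.
pose b := (1 - pip) ^+ 2 * pm y / D.
rewrite (eq_integral (fun x => (a * pp x + b * pm x)%:E)); last first.
  by move=> x _; rewrite /pcomp_density /= -/D /a /b; congr EFin; field.
rewrite integral_density_comb //; last 2 first.
- by rewrite /a divr_ge0 ?addr_ge0 ?mulr_ge0 ?exprn_ge0 // ltW.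
- by rewrite /b divr_ge0 ?mulr_ge0 ?exprn_ge0 // ltW.
congr EFin; rewrite /pcomp_neg /= /a /b.
have -> : pip ^+ 2 + (1 - pip) = D by rewrite /D; ring.
by field.
Qed.

End pairwise_comparison_density.

Theorem theorem2 (R : realType) (d : measure_display) (T : measurableType d)
    (mu : {measure set T -> \bar R}) (mu_sf : sigma_finite setT mu)
    (pip : R) (pp pm : T -> R)
    (pip_ge0 : 0 <= pip) (pip_le1 : pip <= 1)
    (pp_dens : is_density mu pp) (pm_dens : is_density mu pm)
    (dO : measure_display) (Omega : measurableType dO)
    (P : probability Omega R) (n : nat) (X X' : 'I_n -> Omega -> T)
    (mXX' : forall i, measurable_fun setT (fun w => (X i w, X' i w)))
    (indep : mutually_independent P (fun i w => (X i w, X' i w)))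
    (dens : forall i, has_density P (fun w => (X i w, X' i w))
                        (mu \x mu)%E (pcomp_density pip pp pm)) :
  (mutually_independent P X /\
   forall i, has_density P (X i) mu (pcomp_pos pip pp pm)) /\
  (mutually_independent P X' /\
   forall i, has_density P (X' i) mu (pcomp_neg pip pp pm)).
Proof.
have mf := measurable_pcomp_density (pip := pip) pp_dens pm_dens.
have f_ge0 := pcomp_density_ge0 pip_ge0 pip_le1 pp_dens pm_dens.
have marg1 := pcomp_density_marginal1 pip_ge0 pip_le1 pp_dens pm_dens.
have marg2 := pcomp_density_marginal2 pip_ge0 pip_le1 pp_dens pm_dens.
split; split.
- exact: mutually_independent_comp measurable_fst indep.
- by move=> i; exact: (has_density_fst mu_sf mu_sf mf f_ge0 (dens i) marg1).
- exact: mutually_independent_comp measurable_snd indep.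
- by move=> i; exact: (has_density_snd mu_sf mu_sf mf f_ge0 (dens i) marg2).
Qed.
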